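(* For every integer $m\geq 0$, $$\frac{H_{m+1}-1}{\log 2}\leq e_m<\frac{H_{m+1}}{\log 2}-0.161<\frac{H_{m+1}}{\log 2}.$$
   Context: $H_n=\sum_{j=1}^{n}\frac1j$ denotes the $n$-th harmonic number. The sequence $(e_m)_{m\geq0}$ of rational numbers is defined by $e_0=0$ and, for $m\geq1$, $$e_m=\frac{2^{m+1}+\sum_{j=1}^{m}\binom{m+1}{j}e_{m-j}}{2^{m+1}-2}.$$ *)

From Stdlib Require Import Reals Lra List.
Open Scope R_scope.

Fixpoint harmonic (n : nat) : R :=
  match n with
  | O => 0
  | S k => harmonic k + / INR (S k)
  end.

(* Given l = [e_{m-1}; ...; e_0] (so nth (j-1) l 0 = e_{m-j}), compute e_m
   for m >= 1 by the defining recurrence. *)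
Definition e_next (m : nat) (l : list R) : R :=
  (2 ^ (S m) + sum_f 1 m (fun j => C (S m) j * nth (j - 1) l 0))
  / (2 ^ (S m) - 2).

Fixpoint e_list (m : nat) : list R :=
  match m with
  | O => 0 :: nil
  | S k => let l := e_list k in e_next (S k) l :: l
  end.

Definition e (m : nat) : R := nth 0 (e_list m) 0.

Lemma e_0 : e 0 = 0. Proof. reflexivity. Qed.
Lemma e_1 : e 1 = 2.
Proof. unfold e, e_list, e_next, sum_f, C; simpl. field. Qed.

From Stdlib Require Import Reals Lra Lia List Wf_nat.
Open Scope R_scope.

(* The recurrence writes (2^(m+1) - 2) e_m as a combination of e_0, ..., e_(m-1)
   with nonnegative binomial coefficients, so any sequence satisfying it with <=
   (resp. >=) stays below (resp. above) e.  Profiles a H_(m+1) + b nearly satisfy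
   it thanks to the binomial transform
     sum_k C(n,k) H_k = 2^n (H_n - T_n),   T_n = sum_(k=1..n) 1/(k 2^k),
   where T_n is a partial sum of the series ln 2 = sum 1/(k 2^k) with tail at most
   1/((n+1) 2^n).  For a = 1/ln 2 the leading terms cancel and only this tail is
   left, which allows b = -1/ln 2 for the lower bound and b = -0.162 for the upper
   one. *)

Lemma harmonic_nonneg n : 0 <= harmonic n.
Proof.
  induction n as [|n IH]; cbn [harmonic]; [lra|].
  pose proof (Rinv_0_lt_compat (INR (S n)) (lt_0_INR _ (Nat.lt_0_succ n))); lra.
Qed.

Lemma harmonic_S_le n : harmonic (S n) <= (INR (S n) + 1) / 2.
Proof.
  induction n as [|n IH]; [cbn [harmonic]; simpl INR; lra|].
  change (harmonic (S (S n))) with (harmonic (S n) + / INR (S (S n))).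
  assert (2 <= INR (S (S n))) by (rewrite !S_INR; pose proof (pos_INR n); lra).
  assert (/ INR (S (S n)) <= / 2) by (apply Rinv_le_contravar; lra).
  pose proof (S_INR (S n)); lra.
Qed.

Lemma sum_f_R0_rev F n : sum_f_R0 (fun i => F (n - i)%nat) n = sum_f_R0 F n.
Proof.
  induction n as [|n IH]; [reflexivity|].
  rewrite decomp_sum by lia; simpl pred.
  change (sum_f_R0 (fun i => F (S n - S i)%nat) n)
    with (sum_f_R0 (fun i => F (n - i)%nat) n).
  rewrite IH; simpl; ring.
Qed.

(* Pascal's triangle, because Stdlib's [C n k] is not [0] for [k > n]. *)
Fixpoint binom (n k : nat) : R :=
  match n, k with
  | O, O => 1
  | O, S _ => 0
  | S _, O => 1
  | S n', S k' => binom n' k' + binom n' (S k')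
  end.

Lemma binom_0 n : binom n 0 = 1.
Proof. now destruct n. Qed.

Lemma binom_gt n k : (n < k)%nat -> binom n k = 0.
Proof.
  revert k; induction n as [|n IH]; intros [|k] Hk; try lia; simpl; auto.
  rewrite !IH by lia; ring.
Qed.

Lemma binom_diag n : binom n n = 1.
Proof.
  induction n as [|n IH]; simpl; auto.
  rewrite IH, binom_gt by lia; ring.
Qed.

Lemma binom_1 n : binom n 1 = INR n.
Proof.
  induction n as [|n IH]; simpl binom; auto.
  rewrite binom_0, IH, S_INR; ring.
Qed.

Lemma binom_ge0 n k : 0 <= binom n k.
Proof.
  revert k; induction n as [|n IH]; intros [|k]; simpl; try lra.
  pose proof (IH k); pose proof (IH (S k)); lra.
Qed.

Lemma C_n_0 n : C n 0 = 1.
Proof. unfold C; rewrite Nat.sub_0_r; simpl; field; apply INR_fact_neq_0. Qed.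

Lemma C_n_n n : C n n = 1.
Proof. unfold C; rewrite Nat.sub_diag; simpl; field; apply INR_fact_neq_0. Qed.

Lemma binom_C n k : (k <= n)%nat -> binom n k = C n k.
Proof.
  revert k; induction n as [|n IH]; intros [|k] Hk; try lia;
    try (rewrite binom_0, C_n_0; reflexivity).
  simpl; destruct (Nat.eq_dec k n) as [->|Hkn].
  - rewrite (binom_gt n (S n)), binom_diag, !C_n_n by lia; ring.
  - rewrite !IH by lia; apply pascal; lia.
Qed.

Lemma binom_sym n k : (k <= n)%nat -> binom n (n - k) = binom n k.
Proof. intros Hk; rewrite !binom_C by lia; symmetry; apply pascal_step1; lia. Qed.

Lemma binom_absorb n k :
  (k <= n)%nat -> binom n k / INR (S k) = binom (S n) (S k) / INR (S n).
Proof.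
  intros Hk; rewrite !binom_C, pascal_step3, pascal_step2 by lia.
  assert (INR (S n - k) <> 0) by (apply not_0_INR; lia).
  assert (INR (S k) <> 0) by (apply not_0_INR; lia).
  assert (INR (S n) <> 0) by (apply not_0_INR; lia).
  field; auto.
Qed.

Definition btrans (n : nat) (phi : nat -> R) : R :=
  sum_f_R0 (fun k => binom n k * phi k) n.

Lemma btrans_add n phi chi :
  btrans n (fun k => phi k + chi k) = btrans n phi + btrans n chi.
Proof.
  unfold btrans; rewrite <- plus_sum; apply sum_eq; intros; ring.
Qed.

Lemma btrans_scal n a phi : btrans n (fun k => a * phi k) = a * btrans n phi.
Proof.
  unfold btrans; rewrite scal_sum; apply sum_eq; intros; ring.
Qed.

Lemma btrans_succ n phi :
  btrans (S n) phi = btrans n phi + btrans n (fun k => phi (S k)).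
Proof.
  unfold btrans; rewrite decomp_sum by lia; simpl pred.
  rewrite (sum_eq _ (fun k => binom n k * phi (S k) + binom n (S k) * phi (S k)))
    by (intros; simpl; ring).
  rewrite plus_sum, binom_0.
  assert (Hlast : sum_f_R0 (fun k => binom n k * phi k) (S n) =
                  binom n 0 * phi 0%nat + sum_f_R0 (fun k => binom n (S k) * phi (S k)) n)
    by (rewrite decomp_sum by lia; reflexivity).
  simpl in Hlast; rewrite binom_gt, binom_0 in Hlast by lia.
  lra.
Qed.

Lemma btrans_const n c : btrans n (fun _ => c) = c * 2 ^ n.
Proof.
  induction n as [|n IH]; [unfold btrans; simpl; ring|].
  rewrite btrans_succ, IH; simpl; ring.
Qed.

Lemma btrans_delta n j : btrans n (fun k => if (k =? j)%nat then 1 else 0) = binom n j.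
Proof.
  revert j; induction n as [|n IH]; intros j.
  - unfold btrans; destruct j; simpl; ring.
  - rewrite btrans_succ, IH; destruct j as [|j]; simpl.
    + rewrite btrans_const, binom_0; ring.
    + rewrite IH; ring.
Qed.

Lemma btrans_inv_succ n : btrans n (fun k => / INR (S k)) = (2 ^ S n - 1) / INR (S n).
Proof.
  assert (Hall : 1 * 2 ^ S n = 1 + sum_f_R0 (fun k => binom (S n) (S k) * 1) n).
  { rewrite <- btrans_const; unfold btrans; rewrite decomp_sum by lia.
    simpl pred; rewrite binom_0; ring. }
  unfold btrans.
  rewrite (sum_eq _ (fun k => binom (S n) (S k) * 1 * / INR (S n))).
  - rewrite <- scal_sum; unfold Rdiv; rewrite Rmult_comm; f_equal; lra.
  - intros k Hk; rewrite Rmult_1_r; apply binom_absorb; lia.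
Qed.

Fixpoint log_series (n : nat) (x : R) : R :=
  match n with
  | O => 0
  | S k => log_series k x + x ^ S k / INR (S k)
  end.

Lemma log_series_0 n : log_series n 0 = 0.
Proof. induction n as [|n IH]; simpl; auto; rewrite IH; unfold Rdiv; ring. Qed.

Lemma btrans_harmonic n :
  btrans n harmonic = 2 ^ n * (harmonic n - log_series n (/ 2)).
Proof.
  induction n as [|n IH]; [unfold btrans; simpl; ring|].
  rewrite btrans_succ; simpl harmonic.
  rewrite btrans_add, btrans_inv_succ, IH; simpl log_series.
  rewrite pow_inv.
  assert (INR (S n) <> 0) by (apply not_0_INR; lia).
  assert (2 ^ n <> 0) by (apply pow_nonzero; lra).
  simpl; field; auto.
Qed.

Definition log_remainder (n : nat) (x : R) : R := - ln (1 - x) - log_series n x.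

Lemma derivable_pt_lim_log_remainder n x :
  x < 1 -> derivable_pt_lim (log_remainder n) x (x ^ n / (1 - x)).
Proof.
  intros Hx; induction n as [|n IH].
  - apply (derivable_pt_lim_ext (fun z => - ln (1 - z))).
    { intros z; unfold log_remainder; cbn [log_series]; ring. }
    replace (x ^ 0 / (1 - x)) with (- (/ (1 - x) * (0 - 1))) by (simpl; field; lra).
    apply derivable_pt_lim_opp, (derivable_pt_lim_comp (fun z => 1 - z) ln).
    + apply derivable_pt_lim_minus; [apply derivable_pt_lim_const | apply derivable_pt_lim_id].
    + apply derivable_pt_lim_ln; lra.
  - apply (derivable_pt_lim_ext (fun z => log_remainder n z - / INR (S n) * z ^ S n)).
    { intros z; unfold log_remainder; cbn [log_series]; unfold Rdiv; ring. }
    replace (x ^ S n / (1 - x))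
      with (x ^ n / (1 - x) - / INR (S n) * (INR (S n) * x ^ pred (S n))).
    + apply derivable_pt_lim_minus; auto.
      apply derivable_pt_lim_scal, derivable_pt_lim_pow.
    + assert (INR (S n) <> 0) by (apply not_0_INR; lia).
      simpl pred; change (x ^ S n) with (x * x ^ n); field; lra.
Qed.

Lemma le_of_derivative_nonneg f f' a b :
  a <= b ->
  (forall x, a <= x <= b -> derivable_pt_lim f x (f' x)) ->
  (forall x, a <= x <= b -> 0 <= f' x) ->
  f a <= f b.
Proof.
  intros Hab Hf Hpos; destruct (Req_dec a b) as [<-|Hne]; [lra|].
  destruct (MVT_cor3 f f' a b) as [c [Hc1 [Hc2 ->]]]; [lra|intros; apply Hf; lra|].
  pose proof (Hpos c (conj Hc1 Hc2)); nra.
Qed.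

Lemma ln2_sub_log_series_bounds n :
  0 <= ln 2 - log_series n (/ 2) <= / (INR (S n) * 2 ^ n).
Proof.
  assert (Hhalf : ln 2 - log_series n (/ 2) = log_remainder n (/ 2)).
  { unfold log_remainder; replace (1 - / 2) with (/ 2) by field.
    rewrite ln_Rinv by lra; ring. }
  assert (Hzero : log_remainder n 0 = 0).
  { unfold log_remainder; rewrite log_series_0.
    replace (1 - 0) with 1 by ring; rewrite ln_1; ring. }
  assert (HSn : 0 < INR (S n)) by (apply lt_0_INR; lia).
  rewrite Hhalf; split.
  - rewrite <- Hzero; apply (le_of_derivative_nonneg _ (fun x => x ^ n / (1 - x))).
    + lra.
    + intros; apply derivable_pt_lim_log_remainder; lra.
    + intros x Hx; apply Rle_mult_inv_pos; [apply pow_le|]; lra.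
  - (* on [0, 1/2] the derivative [x^n/(1-x)] is at most that of [2 x^(n+1)/(n+1)] *)
    assert (Hdom : log_remainder n (/ 2) - 2 / INR (S n) * (/ 2) ^ S n <= 0).
    { replace 0 with (log_remainder n 0 - 2 / INR (S n) * 0 ^ S n)
        by (rewrite Hzero; simpl; ring).
      apply Ropp_le_cancel.
      apply (le_of_derivative_nonneg (fun x => - (log_remainder n x - 2 / INR (S n) * x ^ S n))
               (fun x => - (x ^ n / (1 - x) - 2 / INR (S n) * (INR (S n) * x ^ pred (S n))))).
      + lra.
      + intros; apply derivable_pt_lim_opp, derivable_pt_lim_minus.
        * apply derivable_pt_lim_log_remainder; lra.
        * apply derivable_pt_lim_scal, derivable_pt_lim_pow.
      + intros x Hx; simpl pred.
        assert (0 <= x ^ n) by (apply pow_le; lra).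
        replace (- (x ^ n / (1 - x) - 2 / INR (S n) * (INR (S n) * x ^ n)))
          with (x ^ n * (1 - 2 * x) / (1 - x)) by (field; lra).
        apply Rle_mult_inv_pos; nra. }
    rewrite pow_inv in Hdom; simpl pow in *.
    replace (/ (INR (S n) * 2 ^ n)) with (2 / INR (S n) * / (2 * 2 ^ n)); [lra|].
    assert (0 < 2 ^ n) by (apply pow_lt; lra).
    field; lra.
Qed.

Lemma ln2_bounds : 1 / 2 <= ln 2 <= 6934 / 10000.
Proof.
  destruct (ln2_sub_log_series_bounds 1) as [H1 _].
  destruct (ln2_sub_log_series_bounds 6) as [_ H6].
  simpl in H1, H6; lra.
Qed.

Definition e_rhs (g : nat -> R) (k : nat) : R :=
  2 ^ S (S k) + sum_f_R0 (fun j => C (S (S k)) (S j) * g (k - j)%nat) k.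

Lemma nth_e_list k i : (i <= k)%nat -> nth i (e_list k) 0 = e (k - i).
Proof.
  revert i; induction k as [|k IH]; intros [|i] Hi; try lia; try reflexivity.
  cbn [e_list nth]; rewrite IH by lia; reflexivity.
Qed.

Lemma pow2_SS_sub2_pos k : 0 < 2 ^ S (S k) - 2.
Proof.
  assert (1 <= 2 ^ k) by (apply pow_R1_Rle; lra).
  simpl; lra.
Qed.

Lemma e_rec k : e (S k) * (2 ^ S (S k) - 2) = e_rhs e k.
Proof.
  pose proof (pow2_SS_sub2_pos k).
  unfold e at 1; cbn [e_list nth]; unfold e_next, sum_f, e_rhs.
  replace (S k - 1)%nat with k by lia.
  rewrite (sum_eq _ (fun j => C (S (S k)) (S j) * e (k - j))).
  - field; lra.
  - intros j Hj; replace (j + 1)%nat with (S j) by lia.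
    replace (S j - 1)%nat with j by lia; rewrite nth_e_list by lia; reflexivity.
Qed.

Lemma e_rhs_le g h k :
  (forall j, (j <= k)%nat -> g j <= h j) -> e_rhs g k <= e_rhs h k.
Proof.
  intros Hgh; unfold e_rhs; apply Rplus_le_compat_l, sum_Rle; intros j Hj.
  rewrite <- binom_C by lia.
  apply Rmult_le_compat_l; [apply binom_ge0 | apply Hgh; lia].
Qed.

Lemma subsolution_le_e g :
  g 0%nat <= e 0 ->
  (forall k, g (S k) * (2 ^ S (S k) - 2) <= e_rhs g k) ->
  forall m, g m <= e m.
Proof.
  intros H0 Hsub m; induction m as [[|k] IH] using lt_wf_ind; auto.
  apply (Rmult_le_reg_r _ _ _ (pow2_SS_sub2_pos k)).
  rewrite e_rec; apply (Rle_trans _ _ _ (Hsub k)), e_rhs_le.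
  intros j Hj; apply IH; lia.
Qed.

Lemma e_le_supersolution g :
  e 0 <= g 0%nat ->
  (forall k, e_rhs g k <= g (S k) * (2 ^ S (S k) - 2)) ->
  forall m, e m <= g m.
Proof.
  intros H0 Hsup m; induction m as [[|k] IH] using lt_wf_ind; auto.
  apply (Rmult_le_reg_r _ _ _ (pow2_SS_sub2_pos k)).
  rewrite e_rec; refine (Rle_trans _ _ _ _ (Hsup k)); apply e_rhs_le.
  intros j Hj; apply IH; lia.
Qed.

Lemma e_rhs_shift psi k :
  e_rhs (fun j => psi (S j)) k =
  2 ^ S (S k) + btrans (S (S k)) psi - psi (S (S k)) - psi 0%nat.
Proof.
  unfold e_rhs, btrans.
  rewrite <- (sum_f_R0_rev (fun j => binom (S (S k)) j * psi j)).
  rewrite (sum_eq (fun i => binom (S (S k)) (S (S k) - i) * psi (S (S k) - i)%nat)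
                  (fun i => binom (S (S k)) i * psi (S (S k) - i)%nat))
    by (intros; rewrite binom_sym by lia; reflexivity).
  rewrite (decomp_sum _ (S (S k))) by lia; simpl pred; cbn [sum_f_R0].
  rewrite binom_0, Nat.sub_0_r, Nat.sub_diag, binom_diag.
  rewrite (sum_eq (fun j => C (S (S k)) (S j) * psi (S (k - j)))
                  (fun i => binom (S (S k)) (S i) * psi (S (S k) - S i)%nat)).
  - ring.
  - intros j Hj; rewrite binom_C by lia.
    replace (S (S k) - S j)%nat with (S (k - j)) by lia; reflexivity.
Qed.

(* The indicator term lets the profile take an arbitrary value at [0]. *)
Lemma e_rhs_harmonic_profile a b d k :
  e_rhs (fun j => a * harmonic (S j) + b + d * (if (j =? 0)%nat then 1 else 0)) k =
  2 ^ S (S k) * (1 + a * (harmonic (S (S k)) - log_series (S (S k)) (/ 2)) + b)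
  + d * INR (S (S k)) - a * harmonic (S (S k)) - 2 * b.
Proof.
  pose (psi i := a * harmonic i + b + d * (if (i =? 1)%nat then 1 else 0)).
  transitivity (e_rhs (fun j => psi (S j)) k); [reflexivity|].
  rewrite e_rhs_shift; unfold psi.
  rewrite !btrans_add, !btrans_scal, btrans_const, btrans_delta,
    binom_1, btrans_harmonic.
  cbn [harmonic Nat.eqb]; ring.
Qed.

Lemma e_ge_harmonic m : (harmonic (S m) - 1) / ln 2 <= e m.
Proof.
  pose proof ln2_bounds as Hln2.
  set (a := / ln 2).
  assert (Ha : 0 < a) by (apply Rinv_0_lt_compat; lra).
  assert (Hgm : (harmonic (S m) - 1) / ln 2
                = a * harmonic (S m) + - a + 0 * (if (m =? 0)%nat then 1 else 0))
    by (rewrite Rmult_0_l; unfold a, Rdiv; ring).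
  rewrite Hgm; clear Hgm; revert m.
  apply subsolution_le_e.
  - rewrite e_0; cbn [harmonic]; simpl INR; lra.
  - intros k; rewrite e_rhs_harmonic_profile; cbn [Nat.eqb].
    destruct (ln2_sub_log_series_bounds (S (S k))) as [HT _].
    pose proof (harmonic_nonneg (S (S k))).
    assert (HaT : a * log_series (S (S k)) (/ 2) <= 1).
    { replace 1 with (a * ln 2) by (unfold a; field; lra).
      apply Rmult_le_compat_l; lra. }
    assert (0 < 2 ^ S (S k)) by (apply pow_lt; lra).
    nra.
Qed.

Lemma scaled_ln2_tail_add_harmonic_le k :
  2 ^ S (S k) * (ln 2 - log_series (S (S k)) (/ 2)) + harmonic (S (S k))
  <= (1 - 162 / 1000 * ln 2) * INR (S (S k)).
Proof.
  pose proof ln2_bounds as Hln2.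
  destruct k as [|k].
  - (* for n = 2 the tail estimate is too weak; use [log_series 2 (1/2) = 5/8] *)
    cbn [harmonic log_series]; simpl INR; simpl pow; nra.
  - set (n := S (S (S k))) in *; set (P := 2 ^ n).
    destruct (ln2_sub_log_series_bounds n) as [_ HT]; fold P in HT.
    assert (HP : 0 < P) by (apply pow_lt; lra).
    assert (HN : 3 <= INR n) by (unfold n; rewrite !S_INR; pose proof (pos_INR k); lra).
    assert (HSn : 4 <= INR (S n)) by (rewrite S_INR; lra).
    assert (HPT : P * (ln 2 - log_series n (/ 2)) <= / 4).
    { apply (Rle_trans _ (P * / (INR (S n) * P))).
      - apply Rmult_le_compat_l; lra.
      - replace (P * / (INR (S n) * P)) with (/ INR (S n)) by (field; lra).
        apply Rinv_le_contravar; lra. }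
    pose proof (harmonic_S_le (S (S k))) as HH; fold n in HH.
    nra.
Qed.

Lemma e_le_harmonic m : (1 <= m)%nat -> e m <= harmonic (S m) / ln 2 - 162 / 1000.
Proof.
  pose proof ln2_bounds as Hln2.
  set (a := / ln 2); set (c := 162 / 1000).
  assert (Ha : 0 < a) by (apply Rinv_0_lt_compat; lra).
  intros Hm.
  assert (Hgm : harmonic (S m) / ln 2 - c
                = a * harmonic (S m) + - c + (c - a) * (if (m =? 0)%nat then 1 else 0))
    by (destruct m; [lia|]; cbn [Nat.eqb]; unfold a, Rdiv; ring).
  rewrite Hgm; clear Hgm Hm; revert m.
  apply e_le_supersolution.
  - rewrite e_0; cbn [Nat.eqb harmonic]; simpl INR; rewrite Rinv_1; lra.
  - intros k; rewrite e_rhs_harmonic_profile; cbn [Nat.eqb].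
    pose proof (scaled_ln2_tail_add_harmonic_le k) as Hmargin.
    set (N := INR (S (S k))) in *; set (H := harmonic (S (S k))) in *;
      set (T := log_series (S (S k)) (/ 2)) in *; set (P := 2 ^ S (S k)) in *.
    assert (Hdiff : (a * H + - c) * (P - 2)
                    - (P * (1 + a * (H - T) + - c) + (c - a) * N - a * H - 2 * - c)
                    = a * ((1 - c * ln 2) * N - (P * (ln 2 - T) + H)))
      by (unfold a; field; lra).
    assert (0 <= a * ((1 - c * ln 2) * N - (P * (ln 2 - T) + H)))
      by (apply Rmult_le_pos; unfold c in *; lra).
    lra.
Qed.

Theorem proposition1 (m : nat) :
  (harmonic (S m) - 1) / ln 2 <= e m /\
  e m < harmonic (S m) / ln 2 - 161 / 1000 /\
  harmonic (S m) / ln 2 - 161 / 1000 < harmonic (S m) / ln 2.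
Proof.
  split; [apply e_ge_harmonic | split; [|lra]].
  destruct m as [|m].
  - pose proof ln2_bounds.
    assert (Hinv : 1 / ln 2 * ln 2 = 1) by (field; lra).
    rewrite e_0; cbn [harmonic]; simpl INR; rewrite Rinv_1, Rplus_0_l; nra.
  - pose proof (e_le_harmonic (S m) ltac:(lia)); lra.
Qed.
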